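(* Let $T$ be any finite rooted tree with root $r$ (arbitrary numbers of children), let $(X_v)$ be a tree Markov random field on $T$ over a finite state set $\mathcal S$ whose edge transition matrices all satisfy $\|M_e\|\le\lambda$ for some $0<\lambda<1$, and let $A\subseteq\mathcal S$. Then $$\mathbf V(Z_A)\le\frac12\sum_{v\in V(T)\setminus\{r\}}\Delta(v)^2,\qquad\text{where }\Delta(v)=2\sum_{\ell\in L_v}\lambda^{d(v,\ell)}.$$ More precisely, for every vertex $u$ and every $b\in\mathcal S$, the number $Z_u$ of leaves $\ell$ of the subtree rooted at $u$ with $X_\ell\in A$ satisfies $\mathbf V(Z_u\mid X_u=b)\le\frac12\sum_{v\in V(T_u)\setminus\{u\}}\Delta(v)^2$.
   Context: A tree Markov random field on a rooted tree $T$ with root $r$ over a finite state set $\mathcal S$ assigns to each edge $e=(u,v)$ ($u$ the parent of $v$) an $|\mathcal S|\times|\mathcal S|$ row-stochastic matrix $M_e$; the $\mathcal S$-valued random variables $(X_v)_{v\in V(T)}$ are generated by drawing $X_r$ from a distribution on $\mathcal S$ and then, going down the tree, drawing each $X_v$ independently of everything else given its parent's state, with $\mathbf P[X_v=b\mid X_u=a]=M_e(a,b)$. For a real square matrix $M$, $\|M\|=\max_{x\neq 0,\ x\perp\mathbf 1}\|x^TM\|_1/\|x\|_1$, where $\mathbf 1$ is the all-ones vector. $T_u$ is the subtree rooted at $u$, $L_v$ is the set of leaves of $T_v$, and $d(v,\ell)$ is the number of edges on the path from $v$ to $\ell$. $Z_A$ is the number of leaves $\ell$ of $T$ with $X_\ell\in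 A$; conditioning on $X_u=b$ means running the process on $T_u$ started with state $b$ at $u$. $\mathbf V$ denotes variance. *)

From Stdlib Require List.
From HB Require Import structures.
From mathcomp Require Import all_boot all_order all_algebra.
Set Implicit Arguments. Unset Strict Implicit. Unset Printing Implicit Defensive.
Import Order.TTheory GRing.Theory Num.Theory.
Local Open Scope ring_scope.

(* A finite rooted tree whose edges (parent -> child) carry transition
   matrices M : S -> S -> R  (M a b = P[X_child = b | X_parent = a]). *)
Inductive tree (S : Type) (R : Type) : Type :=
  Node of seq ((S -> S -> R) * tree S R).

Inductive config (S : Type) : Type :=
  CNode of S & seq (config S).

(* Law of the tree Markov random field on T_u started with state b at u:
   a finite list of (probability, configuration) pairs, generated top-down:
   each child independently draws its state from the row M b of its edge. *)
Fixpoint law (S : finType) (R : nzRingType) (t : tree S R) (b : S)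
  : seq (R * config S) :=
  match t with
  | Node ch =>
    let fix go (ch : seq ((S -> S -> R) * tree S R)) : seq (R * seq (config S)) :=
      match ch with
      | [::] => [:: (1, [::])]
      | (M, t') :: ch' =>
          [seq (p.1 * q.1, p.2 :: q.2)
          | p <- [seq (M b s * w.1, w.2) | s <- enum S, w <- law t' s],
            q <- go ch']
      end in
    [seq (q.1, CNode b q.2) | q <- go ch]
  end.

Fixpoint ZA (S : finType) (A : {set S}) (c : config S) : nat :=
  match c with
  | CNode s cs =>
    if cs is [::] then (s \in A : nat)
    else (fix go (cs : seq (config S)) : nat :=
            match cs with [::] => 0%N | c' :: cs' => (ZA A c' + go cs')%N end) cs
  end.

Definition EZ (S : finType) (R : nzRingType) (A : {set S}) (t : tree S R) (b : S)
  (k : nat) : R :=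
  \sum_(p <- law t b) p.1 * ((ZA A p.2)%:R ^+ k).

Definition VarZ (S : finType) (R : nzRingType) (A : {set S}) (t : tree S R) (b : S) : R :=
  EZ A t b 2 - (EZ A t b 1) ^+ 2.

Fixpoint edges (S R : Type) (t : tree S R) : seq (S -> S -> R) :=
  match t with
  | Node ch =>
    (fix go (ch : seq ((S -> S -> R) * tree S R)) :=
       match ch with
       | [::] => [::]
       | (M, t') :: ch' => M :: edges t' ++ go ch'
       end) ch
  end.

Definition row_stochastic (S : finType) (R : numDomainType) (M : S -> S -> R) : Prop :=
  (forall a b, 0 <= M a b) /\ (forall a, \sum_(b : S) M a b = 1).

(* ||M|| <= lam, where ||M|| = max_{x <> 0, x _|_ 1} ||x^T M||_1 / ||x||_1
   (unfolded; the case x = 0 is trivial). *)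
Definition norm_le (S : finType) (R : numDomainType) (M : S -> S -> R) (lam : R) : Prop :=
  forall x : S -> R, \sum_(i : S) x i = 0 ->
    \sum_(j : S) `| \sum_(i : S) x i * M i j | <= lam * \sum_(i : S) `| x i |.

(* sum_{l in L_v} lam^{d(v,l)} for the subtree rooted at v. *)
Fixpoint leafw (S : Type) (R : nzRingType) (lam : R) (t : tree S R) : R :=
  match t with
  | Node [::] => 1
  | Node ch =>
    (fix go (ch : seq ((S -> S -> R) * tree S R)) : R :=
       match ch with
       | [::] => 0
       | (_, t') :: ch' => lam * leafw lam t' + go ch'
       end) ch
  end.

Definition Delta (S : Type) (R : nzRingType) (lam : R) (t : tree S R) : R :=
  2 * leafw lam t.

(* sum over v in V(T_u) \ {u} of Delta(v)^2 *)
Fixpoint sumDelta2 (S : Type) (R : nzRingType) (lam : R) (t : tree S R) : R :=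
  match t with
  | Node ch =>
    (fix go (ch : seq ((S -> S -> R) * tree S R)) : R :=
       match ch with
       | [::] => 0
       | (_, t') :: ch' => Delta lam t' ^+ 2 + sumDelta2 lam t' + go ch'
       end) ch
  end.

Definition good_edges (S : finType) (R : numDomainType) (lam : R) (t : tree S R) : Prop :=
  forall M, List.In M (edges t) -> row_stochastic M /\ norm_le M lam.

From HB Require Import structures.
From mathcomp Require Import all_boot all_order all_algebra.
From mathcomp Require Import ring lra.
Set Implicit Arguments. Unset Strict Implicit. Unset Printing Implicit Defensive.
Import Order.TTheory GRing.Theory Num.Theory.
Local Open Scope ring_scope.

(* The proof is an induction on the tree that carries three facts about the
   subtree T_u, as functions of the starting state s at u:
   (mass)    the law of the configuration on T_u has total mass 1;
   (mean)    s |-> E[Z_u | X_u = s] is "1/2 w(T_u)-Lipschitz against zero-sum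
             vectors", w(T_u) = sum_{l in L_u} lam^{d(u,l)}: for every x with
             sum x = 0, |sum_s x_s E[Z_u | s]| <= 1/2 w(T_u) ||x||_1;
   (var)     Var(Z_u | X_u = s) <= 1/2 sum_{v in T_u \ u} Delta(v)^2.
   The children of a vertex form a forest whose subtrees are independent
   given the state of the parent, so the moments of the forest's leaf count
   satisfy a product recursion over the list of children.  Mass follows from
   row-stochasticity; the mean bound from the contraction ||M_e|| <= lam;
   the variance bound from the law of total variance, a Lipschitz function
   deviating from any of its averages by at most twice its constant. *)

Section ProbabilityVectors.
Variables (R : realFieldType) (S : finType).

Definition lipschitz0 (c : R) (f : S -> R) : Prop :=
  forall x : S -> R, \sum_i x i = 0 ->
    `|\sum_s x s * f s| <= c * \sum_s `|x s|.

Definition pmean (p f : S -> R) : R := \sum_s p s * f s.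
Definition pvar (p f : S -> R) : R := \sum_s p s * f s ^+ 2 - pmean p f ^+ 2.

Lemma sum_indicator_mul (s : S) (f : S -> R) : \sum_i (i == s)%:R * f i = f s.
Proof.
rewrite (bigD1 s) //= eqxx mul1r big1 ?addr0 // => i /negbTE ->.
by rewrite mul0r.
Qed.

Lemma sum_indicator (s : S) : \sum_i ((i == s)%:R : R) = 1.
Proof.
by rewrite -[RHS](sum_indicator_mul s (fun _ => 1)); apply: eq_bigr => i _; rewrite mulr1.
Qed.

(* A [0,1]-valued function (e.g. the indicator of A) is 1/2-Lipschitz:
   x sees f and 1 - f with opposite sums, each bounded by its own part of ||x||_1. *)
Lemma lipschitz0_unit_interval (f : S -> R) :
  (forall s, 0 <= f s <= 1) -> lipschitz0 2^-1 f.
Proof.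
move=> f01 x hx; set T := \sum_s x s * f s.
have compl : \sum_s x s * (1 - f s) = - T.
  under eq_bigr => s _ do rewrite mulrBr mulr1.
  by rewrite sumrB hx sub0r.
have bound_f : `|T| <= \sum_s `|x s| * f s.
  apply: le_trans (ler_norm_sum _ _ _) _; apply: ler_sum => s _.
  by have /andP[f0 _] := f01 s; rewrite normrM (ger0_norm f0).
have bound_compl : `|- T| <= \sum_s `|x s| * (1 - f s).
  rewrite -compl; apply: le_trans (ler_norm_sum _ _ _) _; apply: ler_sum => s _.
  by have /andP[_ f1] := f01 s; rewrite normrM (ger0_norm (x := 1 - f s)) ?subr_ge0.
have split_norm : \sum_s `|x s| * f s + \sum_s `|x s| * (1 - f s) = \sum_s `|x s|.
  by rewrite -big_split; apply: eq_bigr => s _ /=; ring.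
rewrite normrN in bound_compl; lra.
Qed.

Lemma lipschitz0_add (c d : R) (f g : S -> R) :
  lipschitz0 c f -> lipschitz0 d g -> lipschitz0 (c + d) (fun s => f s + g s).
Proof.
move=> hf hg x hx; under eq_bigr => s _ do rewrite mulrDr.
rewrite big_split mulrDl /=; apply: le_trans (ler_normD _ _) _.
exact: lerD (hf x hx) (hg x hx).
Qed.

(* Averaging f with a stochastic matrix M of norm <= lam contracts the constant
   by lam: x^T M is again a zero-sum vector, of l1 norm <= lam ||x||_1. *)
Lemma lipschitz0_stochastic (M : S -> S -> R) (lam c : R) (f : S -> R) :
  row_stochastic M -> norm_le M lam -> 0 <= c -> lipschitz0 c f ->
  lipschitz0 (lam * c) (fun s => \sum_j M s j * f j).
Proof.
move=> [_ rowsum] hM c0 hf x hx; set y := fun j => \sum_i x i * M i j.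
have push : \sum_s x s * (\sum_j M s j * f j) = \sum_j y j * f j.
  under eq_bigr => s _ do rewrite mulr_sumr.
  rewrite exchange_big; apply: eq_bigr => j _; rewrite mulr_suml.
  by apply: eq_bigr => i _; rewrite mulrA.
have y_zero_sum : \sum_j y j = 0.
  rewrite /y exchange_big -[RHS]hx; apply: eq_bigr => i _.
  by rewrite -mulr_sumr rowsum mulr1.
rewrite push; apply: le_trans (hf y y_zero_sum) _.
by rewrite [lam * c]mulrC -mulrA; apply: (ler_wpM2l c0); exact: hM.
Qed.

(* A c-Lipschitz function deviates from any of its p-averages by at most 2c:
   apply the bound to x = delta_s - p, whose l1 norm is at most 2. *)
Lemma lipschitz0_deviation (p f : S -> R) (c : R) :
  (forall s, 0 <= p s) -> \sum_s p s = 1 -> 0 <= c -> lipschitz0 c f ->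
  forall s, `|f s - pmean p f| <= 2 * c.
Proof.
move=> p0 p1 c0 hf s; pose x i := (i == s)%:R - p i.
have x_zero_sum : \sum_i x i = 0 by rewrite /x sumrB sum_indicator p1 subrr.
have x_f : \sum_i x i * f i = f s - pmean p f.
  by rewrite /x; under eq_bigr => i _ do rewrite mulrBl; rewrite sumrB sum_indicator_mul.
have x_norm : \sum_i `|x i| <= 2.
  apply: le_trans (_ : \sum_i ((i == s)%:R + p i) <= _).
    apply: ler_sum => i _; apply: le_trans (ler_normB _ _) _.
    by rewrite ger0_norm ?ger0_norm.
  by rewrite big_split /= sum_indicator p1.
rewrite -x_f; apply: le_trans (hf x x_zero_sum) _.
by rewrite mulrC; apply: ler_wpM2r.
Qed.

Lemma pmean_le_const (p f : S -> R) (c : R) :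
  (forall s, 0 <= p s) -> \sum_s p s = 1 -> (forall s, f s <= c) -> pmean p f <= c.
Proof.
move=> p0 p1 hf; rewrite -[X in _ <= X]mul1r -{1}p1 mulr_suml.
by apply: ler_sum => s _; apply: ler_wpM2l.
Qed.

Lemma pvar_le_sqr (p f : S -> R) (L : R) :
  (forall s, 0 <= p s) -> \sum_s p s = 1 ->
  (forall s, `|f s - pmean p f| <= L) -> pvar p f <= L ^+ 2.
Proof.
move=> p0 p1 hf; rewrite /pvar; set a := pmean p f.
have centered : \sum_s p s * f s ^+ 2 - a ^+ 2 = \sum_s p s * (f s - a) ^+ 2.
  have expand : \sum_s p s * (f s - a) ^+ 2 =
      \sum_s p s * f s ^+ 2 - 2 * a * (\sum_s p s * f s) + a ^+ 2 * \sum_s p s.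
    rewrite [2 * a * _]mulr_sumr [a ^+ 2 * _]mulr_sumr -sumrB -big_split.
    by apply: eq_bigr => s _ /=; ring.
  by rewrite expand p1 -/(pmean p f) -/a; ring.
rewrite centered -[X in _ <= X]mul1r -p1 mulr_suml; apply: ler_sum => s _.
apply: ler_wpM2l => //; rewrite -(real_normK (num_real (f s - a))).
have := hf s; have := normr_ge0 (f s - a); rewrite -/a; nra.
Qed.

End ProbabilityVectors.

Section TreeMoments.
Variables (R : realFieldType) (S : finType) (A : {set S}).

Local Notation forest := (seq ((S -> S -> R) * tree S R)).

Definition forest_law (b : S) : forest -> seq (R * seq (config S)) :=
  fix go (ch : forest) : seq (R * seq (config S)) :=
      match ch with
      | [::] => [:: (1, [::])]
      | (M, t') :: ch' =>
          [seq (p.1 * q.1, p.2 :: q.2)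
          | p <- [seq (M b s * w.1, w.2) | s <- enum S, w <- law t' s],
            q <- go ch']
      end.

Definition forest_count : seq (config S) -> nat :=
  fix go (cs : seq (config S)) : nat :=
    match cs with [::] => 0%N | c' :: cs' => (ZA A c' + go cs')%N end.

Definition Ex (T : Type) (L : seq (R * T)) (g : T -> R) : R :=
  \sum_(p <- L) p.1 * g p.2.

Definition fmoment (k : nat) (b : S) (ch : forest) : R :=
  Ex (forest_law b ch) (fun cs => (forest_count cs)%:R ^+ k).

Definition fvar (b : S) (ch : forest) : R := fmoment 2 b ch - fmoment 1 b ch ^+ 2.

(* Independence of the first child from the rest, given the parent state. *)
Lemma Ex_forest_cons b M t' ch (g : seq (config S) -> R) :
  Ex (forest_law b ((M, t') :: ch)) g =
  \sum_s M b s * Ex (law t' s) (fun c => Ex (forest_law b ch) (fun cs => g (c :: cs))).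
Proof.
rewrite /Ex /= big_allpairs_dep /= big_allpairs_dep /= big_enum /=.
apply: eq_bigr => s _; rewrite mulr_sumr; apply: eq_bigr => w _.
rewrite !mulr_sumr; apply: eq_bigr => q _ /=; ring.
Qed.

Lemma EZ_node b c ch k : EZ A (Node (c :: ch)) b k = fmoment k b (c :: ch).
Proof.
transitivity (Ex (forest_law b (c :: ch)) (fun cs => (ZA A (CNode b cs))%:R ^+ k)).
  by rewrite /EZ /Ex /= big_map.
by case: c => M t'; rewrite /fmoment !Ex_forest_cons.
Qed.

Lemma EZ_leaf b k : EZ A (@Node S R [::]) b k = ((b \in A) : nat)%:R ^+ k.
Proof. by rewrite /EZ /= big_seq1 mul1r. Qed.

Lemma fmoment_nil k b : fmoment k b [::] = 0 ^+ k.
Proof. by rewrite /fmoment /Ex /= big_seq1 mul1r. Qed.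

Lemma fmoment0_cons b M t' ch :
  fmoment 0 b ((M, t') :: ch) = \sum_s M b s * (EZ A t' s 0 * fmoment 0 b ch).
Proof.
rewrite /fmoment Ex_forest_cons; apply: eq_bigr => s _; congr (_ * _).
rewrite /EZ /Ex !mulr_suml; apply: eq_bigr => w _ /=.
rewrite !mulr_sumr; apply: eq_bigr => q _ /=; rewrite !expr0; ring.
Qed.

Lemma fmoment1_cons b M t' ch :
  fmoment 1 b ((M, t') :: ch) =
  \sum_s M b s * (EZ A t' s 1 * fmoment 0 b ch + fmoment 1 b ch * EZ A t' s 0).
Proof.
rewrite /fmoment Ex_forest_cons; apply: eq_bigr => s _; congr (_ * _).
rewrite /EZ /Ex mulr_suml mulr_sumr -big_split; apply: eq_bigr => w _ /=.
rewrite !mulr_sumr !mulr_suml -big_split; apply: eq_bigr => q _ /=.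
rewrite natrD ?expr0 ?expr1; ring.
Qed.

Lemma fmoment2_cons b M t' ch :
  fmoment 2 b ((M, t') :: ch) =
  \sum_s M b s * (EZ A t' s 2 * fmoment 0 b ch + 2 * fmoment 1 b ch * EZ A t' s 1
                  + fmoment 2 b ch * EZ A t' s 0).
Proof.
rewrite /fmoment Ex_forest_cons; apply: eq_bigr => s _; congr (_ * _).
rewrite /EZ /Ex mulr_suml !mulr_sumr -!big_split; apply: eq_bigr => w _ /=.
rewrite !mulr_sumr !mulr_suml -!big_split; apply: eq_bigr => q _ /=.
rewrite natrD ?expr0 ?expr1; ring.
Qed.

Section ConsWithUnitMass.
Variables (M : S -> S -> R) (t' : tree S R) (ch : forest).
Hypothesis M_rowsum : forall a, \sum_b M a b = 1.
Hypothesis child_mass : forall s, EZ A t' s 0 = 1.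
Hypothesis tail_mass : forall b, fmoment 0 b ch = 1.

Lemma fmass_cons b : fmoment 0 b ((M, t') :: ch) = 1.
Proof.
by rewrite fmoment0_cons; under eq_bigr => s _ do rewrite child_mass tail_mass !mulr1.
Qed.

Lemma fmean_cons b :
  fmoment 1 b ((M, t') :: ch) = pmean (M b) (fun s => EZ A t' s 1) + fmoment 1 b ch.
Proof.
rewrite fmoment1_cons -[X in _ = _ + X]mulr1 -(M_rowsum b) mulr_sumr -big_split.
by apply: eq_bigr => s _; rewrite child_mass tail_mass /=; ring.
Qed.

(* Law of total variance combined with independence of the two parts. *)
Lemma fvar_cons b :
  fvar b ((M, t') :: ch) =
  pmean (M b) (fun s => VarZ A t' s) + pvar (M b) (fun s => EZ A t' s 1) + fvar b ch.
Proof.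
rewrite /fvar /pvar fmean_cons fmoment2_cons tail_mass.
have weighted_const (r : R) : \sum_s M b s * r = r by rewrite -mulr_suml M_rowsum mul1r.
have second : \sum_s M b s * (EZ A t' s 2 * 1 + 2 * fmoment 1 b ch * EZ A t' s 1
                 + fmoment 2 b ch * EZ A t' s 0)
   = \sum_s M b s * EZ A t' s 2
     + 2 * fmoment 1 b ch * pmean (M b) (fun s => EZ A t' s 1) + fmoment 2 b ch.
  rewrite -[X in _ = _ + X]weighted_const /pmean [2 * _ * _]mulr_sumr -!big_split.
  by apply: eq_bigr => s _; rewrite child_mass /=; ring.
have total : pmean (M b) (fun s => VarZ A t' s) =
    \sum_s M b s * EZ A t' s 2 - \sum_s M b s * EZ A t' s 1 ^+ 2.
  by rewrite /pmean /VarZ -sumrB; apply: eq_bigr => s _; rewrite mulrBr.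
rewrite second total; ring.
Qed.

End ConsWithUnitMass.

End TreeMoments.

Section VarianceBound.
Variables (R : realFieldType) (S : finType) (A : {set S}) (lam : R).
Hypothesis lam_ge0 : 0 <= lam.

Local Notation forest := (seq ((S -> S -> R) * tree S R)).

Definition forest_leafw : forest -> R :=
  fix go (ch : forest) : R :=
    match ch with
    | [::] => 0
    | (_, t') :: ch' => lam * leafw lam t' + go ch'
    end.

Definition forest_sumDelta2 : forest -> R :=
  fix go (ch : forest) : R :=
    match ch with
    | [::] => 0
    | (_, t') :: ch' => Delta lam t' ^+ 2 + sumDelta2 lam t' + go ch'
    end.

Definition tree_ind_children (P : tree S R -> Prop)
  (IH : forall ch, (forall M t', List.In (M, t') ch -> P t') -> P (Node ch)) :
  forall t, P t :=
  fix F (t : tree S R) : P t :=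
  match t with
  | Node ch => IH ch ((fix G (l : forest) : forall M t', List.In (M, t') l -> P t' :=
      match l with
      | [::] => fun M t' (f : List.In (M, t') [::]) => False_ind _ f
      | (M0, t0) :: l' => fun M t' (h : List.In (M, t') ((M0, t0) :: l')) =>
          match h with
          | or_introl e => eq_ind t0 P (F t0) t' (f_equal snd e)
          | or_intror h' => G l' M t' h'
          end
      end) ch)
  end.

Lemma leafw_ge0 (t : tree S R) : 0 <= leafw lam t.
Proof.
elim/tree_ind_children: t => -[|c ch] IH //.
have -> : leafw lam (Node (c :: ch)) = forest_leafw (c :: ch) by [].
elim: (c :: ch) IH => [|[M t'] l IHl] IH //=.
apply: addr_ge0; first by apply: mulr_ge0 => //; apply: (IH M); left.
by apply: IHl => M0 t0 h; apply: (IH M0); right.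
Qed.

Lemma good_edges_cons (M : S -> S -> R) (t' : tree S R) (ch : forest) :
  good_edges lam (Node ((M, t') :: ch)) ->
  [/\ row_stochastic M /\ norm_le M lam, good_edges lam t' & good_edges lam (Node ch)].
Proof.
move=> g; split.
- by apply: g; left.
- by move=> M0 h; apply: g; right; apply: List.in_or_app; left.
- by move=> M0 h; apply: g; right; apply: List.in_or_app; right.
Qed.

Definition tree_invariant (t : tree S R) : Prop :=
  [/\ forall s, EZ A t s 0 = 1,
      lipschitz0 (2^-1 * leafw lam t) (fun s => EZ A t s 1)
    & forall s, VarZ A t s <= 2^-1 * sumDelta2 lam t].

Definition forest_invariant (ch : forest) : Prop :=
  [/\ forall b, fmoment A 0 b ch = 1,
      lipschitz0 (2^-1 * forest_leafw ch) (fun b => fmoment A 1 b ch)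
    & forall b, fvar A b ch <= 2^-1 * forest_sumDelta2 ch].

Lemma forest_invariant_nil : forest_invariant [::].
Proof.
split.
- by move=> b; rewrite fmoment_nil.
- move=> x _; rewrite big1 => [|s _]; last by rewrite fmoment_nil mulr0.
  by rewrite normr0 /= mulr0 mul0r.
- by move=> b; rewrite /fvar !fmoment_nil expr0n /= subrr mulr0.
Qed.

(* Adding a child to a forest preserves the invariant: the child's mean is
   contracted by the edge matrix, and its variance contribution is the averaged
   subtree variance plus the variance of its conditional mean, which is at most
   leafw^2 <= Delta^2 / 2. *)
Lemma forest_invariant_cons (M : S -> S -> R) (t' : tree S R) (ch : forest) :
  row_stochastic M -> norm_le M lam ->
  tree_invariant t' -> forest_invariant ch -> forest_invariant ((M, t') :: ch).
Proof.
move=> stochM normM [C0 C1 C2] [F0 F1 F2].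
have [M_ge0 M_rowsum] := stochM.
have half_w0 : 0 <= 2^-1 * leafw lam t' by apply: mulr_ge0 (leafw_ge0 t'); lra.
have fmeanE := fmean_cons M_rowsum C0 F0.
split.
- exact: fmass_cons.
- have child := lipschitz0_stochastic stochM normM half_w0 C1.
  have sum := lipschitz0_add child F1.
  move=> x hx; under eq_bigr => s _ do rewrite fmeanE.
  by apply: le_trans (sum x hx) _; rewrite /= [2^-1 * (_ + _)]mulrDr mulrCA.
- move=> b; rewrite (fvar_cons M_rowsum C0 F0) /=.
  have avg_var : pmean (M b) (fun s => VarZ A t' s) <= 2^-1 * sumDelta2 lam t'.
    exact: pmean_le_const.
  have mean_var : pvar (M b) (fun s => EZ A t' s 1) <= (2 * (2^-1 * leafw lam t')) ^+ 2.
    exact/pvar_le_sqr/lipschitz0_deviation.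
  have w0 := leafw_ge0 t'; have := F2 b.
  move: avg_var mean_var; rewrite /Delta !expr2; nra.
Qed.

Lemma forest_invariant_all (ch : forest) :
  (forall M t', List.In (M, t') ch -> tree_invariant t') ->
  good_edges lam (Node ch) -> forest_invariant ch.
Proof.
elim: ch => [|[M t'] ch IHch] IH good; first exact: forest_invariant_nil.
have [[stochM normM] _ good_ch] := good_edges_cons good.
apply: forest_invariant_cons => //; first by apply: (IH M); left.
by apply: IHch => // M0 t0 h; apply: (IH M0); right.
Qed.

Lemma good_edges_child (M : S -> S -> R) (t' : tree S R) (ch : forest) :
  List.In (M, t') ch -> good_edges lam (Node ch) -> good_edges lam t'.
Proof.
elim: ch => [|[M0 t0] ch IHch] //= h g; have [_ g0 gch] := good_edges_cons g.
by case: h => [[_ <-] | h] //; exact: IHch.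
Qed.

Lemma tree_invariant_all (t : tree S R) : good_edges lam t -> tree_invariant t.
Proof.
elim/tree_ind_children: t => -[|c ch] IH good.
  split.
  - by move=> s; rewrite EZ_leaf.
  - have indicator01 s : 0 <= EZ A (@Node S R [::]) s 1 <= 1.
      by rewrite EZ_leaf expr1; case: (s \in A); rewrite /= ?lexx ?ler01.
    by rewrite /= mulr1; exact: lipschitz0_unit_interval.
  - by move=> s; rewrite /VarZ !EZ_leaf expr1 subrr /= mulr0.
have [F0 F1 F2] : forest_invariant (c :: ch).
  apply: forest_invariant_all (good) => M t' h.
  exact: IH h (good_edges_child h good).
split.
- by move=> s; rewrite EZ_node.
- by move=> x hx; under eq_bigr => s _ do rewrite EZ_node; exact: F1.
- by move=> s; rewrite /VarZ !EZ_node; exact: F2.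
Qed.

End VarianceBound.

Theorem mainTheorem5 (R : realFieldType) (S : finType) (A : {set S})
  (lam : R) (t : tree S R) (b : S) :
  0 < lam < 1 ->
  good_edges lam t ->
  VarZ A t b <= 2^-1 * sumDelta2 lam t.
Proof.
move=> /andP[lam_gt0 _] good.
by have [_ _ var_bound] := tree_invariant_all A (ltW lam_gt0) good.
Qed.
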